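(* As formal power series, $$1+\frac{q^2+q^3}{1-q^2}+\sum_{n\ge2}\frac{(-q^3;q^4)_{n-1}\,q^{2n}(1+q^{2n-1})}{(q^2;q^2)_n}=\prod_{\substack{n\ge1\\ n\not\equiv1,5,6\ (\mathrm{mod}\ 8)}}\frac{1}{1-q^n}.$$
   Context: $(a;q)_n=\prod_{j=0}^{n-1}(1-aq^j)$. *)

From mathcomp Require Import all_boot all_order all_algebra.
Set Implicit Arguments. Unset Strict Implicit. Unset Printing Implicit Defensive.
Import Order.TTheory GRing.Theory Num.Theory.
Local Open Scope ring_scope.

(* formal power series: f k = coefficient of q^k *)
Definition fps := nat -> rat.

Definition fzero : fps := fun _ => 0.
Definition fone : fps := fun k => if k == 0%N then 1 else 0.
Definition fadd (f g : fps) : fps := fun k => f k + g k.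
Definition fmul (f g : fps) : fps :=
  fun k => \sum_(i < k.+1) f i * g (k - i)%N.

Definition fps_of_poly (p : {poly rat}) : fps := fun k => p`_k.

(* multiplicative inverse of a power series with invertible constant term,
   coefficients computed by the usual recursion *)
Fixpoint finv_upto (f : fps) (n : nat) : nat -> rat :=
  match n with
  | 0%N => fun k => if k == 0%N then (f 0%N)^-1 else 0
  | m.+1 => let g := finv_upto f m in
            fun k => if k == m.+1 then
                       - (f 0%N)^-1 * \sum_(i < m.+1) f i.+1 * g (m - i)%N
                     else g k
  end.
Definition finv (f : fps) : fps := fun k => finv_upto f k k.

Definition qpoch (R : comNzRingType) (a q : R) (n : nat) : R :=
  \prod_(j < n) (1 - a * q ^+ j).

Definition fps_lim (s : nat -> fps) (P : fps) : Prop :=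
  forall k : nat, exists N : nat, forall M : nat, (N <= M)%N -> s M k = P k.

Definition lhs_term (n : nat) : fps :=
  match n with
  | 0%N => fone
  | 1%N => fmul (fps_of_poly ('X^2 + 'X^3)) (finv (fps_of_poly (1 - 'X^2)))
  | _ => fmul (fps_of_poly (qpoch (- 'X^3) 'X^4 (n.-1)
                            * 'X^(2 * n)%N * (1 + 'X^((2 * n).-1)%N)))
              (finv (fps_of_poly (qpoch 'X^2 'X^2 n)))
  end.

Definition rhs_factor (n : nat) : fps :=
  if (n == 0%N) || ((n %% 8)%N \in [:: 1%N; 5%N; 6%N]) then fone
  else finv (fps_of_poly (1 - 'X^n)).

From Pilot Require Import Defs.
From mathcomp Require Import all_boot all_order all_algebra ring zify.
Set Implicit Arguments. Unset Strict Implicit. Unset Printing Implicit Defensive.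
Import Order.TTheory GRing.Theory Num.Theory.
Local Open Scope ring_scope.

(* Everything is done modulo X^K for an arbitrary K, with polynomials over rat
   compared coefficientwise below degree K ([congX K]).
   - The partial sums telescope: the terms up to index m add up to
     (-q^3;q^4)_m / (q^2;q^2)_m, since (1 - q^(2m+2)) + q^(2m+2)(1 + q^(2m+1))
     = 1 + q^(4m+3).
   - Product identity: since (1+q^(8i+3))(1+q^(8i+7))(1-q^(8i+3))(1-q^(8i+7))
     = (1-q^(16i+6))(1-q^(16i+14)), the finite products
     (-q^3;q^4)_{2J} prod_{1<=n<=8J, n mod 8 not in {1,5,6}} (1-q^n)   and
     (q^2;q^2)_{4J} have the closed forms B_J prod_{i<2J} (1-q^(8i+6)) and
     B_J prod_{i<J} (1-q^(8i+6)) for a common B_J; modulo X^K every product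
     involved stabilizes after K factors, so both agree modulo X^K for J = K.
   - Both sides are then congruent modulo X^K to the same polynomial as soon as
     more than K terms (resp. factors) are taken, which gives a common limit. *)

Section TruncatedCongruence.
Variable R : nzRingType.
Implicit Types (p q r : {poly R}) (K : nat).

Definition congX K p q := forall i, (i < K)%N -> p`_i = q`_i.

Lemma congX_refl K p : congX K p p. Proof. by []. Qed.

Lemma congX_sym K p q : congX K p q -> congX K q p.
Proof. by move=> Hpq i Hi; rewrite Hpq. Qed.

Lemma congX_trans K p q r : congX K p q -> congX K q r -> congX K p r.
Proof. by move=> Hpq Hqr i Hi; rewrite Hpq // Hqr. Qed.

Lemma congXD K p q p' q' :
  congX K p p' -> congX K q q' -> congX K (p + q) (p' + q').
Proof. by move=> Hp Hq i Hi; rewrite !coefD Hp // Hq. Qed.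

(* Coefficient i of a product only involves coefficients of index <= i. *)
Lemma congXM K p q p' q' :
  congX K p p' -> congX K q q' -> congX K (p * q) (p' * q').
Proof.
move=> Hp Hq i Hi; rewrite !coefM; apply: eq_bigr => j _.
have Hj : (j < K)%N by apply: leq_ltn_trans Hi; rewrite -ltnS.
by rewrite Hp // Hq // (leq_ltn_trans (leq_subr _ _) Hi).
Qed.

Lemma congX_prod K n (F G : nat -> {poly R}) :
  (forall i, (i < n)%N -> congX K (F i) (G i)) ->
  congX K (\prod_(i < n) F i) (\prod_(i < n) G i).
Proof.
elim: n => [|n IH] HFG; first by rewrite !big_ord0.
rewrite !big_ord_recr /=; apply: congXM; last exact: HFG.
by apply: IH => i Hi; apply: HFG; apply: ltnW.
Qed.

Lemma congX_addXn K e p q : (K <= e)%N -> congX K (p + q * 'X^e) p.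
Proof. by move=> He i Hi; rewrite coefD coefMXn (leq_trans Hi He) addr0. Qed.

Lemma congX_1mX K e : (K <= e)%N -> congX K (1 - 'X^e) 1.
Proof. by move=> He; rewrite -mulN1r; apply: congX_addXn. Qed.

Lemma congX_1pX K e : (K <= e)%N -> congX K (1 + 'X^e) 1.
Proof. by move=> He; rewrite -[X in 1 + X]mul1r; apply: congX_addXn. Qed.

Lemma coef0_1mX e : (0 < e)%N -> (1 - 'X^e : {poly R})`_0 = 1.
Proof. by case: e => // e _; rewrite coefB coef1 coefXn subr0. Qed.

Lemma congX_prod_stable K L L' (F : nat -> {poly R}) : (K <= L)%N -> (K <= L')%N ->
  (forall n, (K <= n)%N -> congX K (F n) 1) ->
  congX K (\prod_(n < L) F n) (\prod_(n < L') F n).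
Proof.
move=> HL HL' HF.
have stable M : (K <= M)%N -> congX K (\prod_(n < M) F n) (\prod_(n < K) F n).
  elim: M => [|M IH]; first by rewrite leqn0 => /eqP ->.
  rewrite leq_eqVlt => /orP[/eqP <-|HKM] //.
  rewrite big_ord_recr /= -[X in congX _ _ X]mulr1.
  by apply: congXM; [exact: IH | exact: HF].
exact: congX_trans (stable _ HL) (congX_sym (stable _ HL')).
Qed.

End TruncatedCongruence.

Arguments congX_refl {R K p}.

(* [tr K f]: the truncation of the power series f to a polynomial of degree < K;
   it turns the series operations into polynomial operations modulo X^K. *)
Definition tr (K : nat) (f : fps) : {poly rat} := \poly_(i < K) f i.

Lemma coef_tr K f k : (k < K)%N -> (tr K f)`_k = f k.
Proof. by move=> Hk; rewrite coef_poly Hk. Qed.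

Lemma tr_add K f g : tr K (fadd f g) = tr K f + tr K g.
Proof. by apply/polyP => i; rewrite coefD !coef_poly; case: ifP; rewrite ?addr0. Qed.

Lemma tr_mul K f g : congX K (tr K (fmul f g)) (tr K f * tr K g).
Proof.
move=> i Hi; rewrite coefM coef_tr //; apply: eq_bigr => j _.
have Hj : (j < K)%N by apply: leq_ltn_trans Hi; rewrite -ltnS.
by rewrite !coef_tr // (leq_ltn_trans (leq_subr _ _) Hi).
Qed.

Lemma tr_poly K p : congX K (tr K (fps_of_poly p)) p.
Proof. exact: coef_tr. Qed.

Lemma tr_one K : congX K (tr K fone) 1.
Proof. by move=> i Hi; rewrite coef_tr // coef1 /fone; case: (i == 0%N). Qed.

Lemma tr_bigadd K n (F : nat -> fps) :
  tr K (\big[fadd/fzero]_(i < n) F i) = \sum_(i < n) tr K (F i).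
Proof.
elim: n F => [|n IH] F.
  by rewrite !big_ord0; apply/polyP => i; rewrite coef_poly coef0 if_same.
by rewrite !big_ord_recl tr_add (IH (fun j => F j.+1)).
Qed.

Lemma tr_bigmul K n (F : nat -> fps) :
  congX K (tr K (\big[fmul/fone]_(i < n) F i)) (\prod_(i < n) tr K (F i)).
Proof.
elim: n F => [|n IH] F; first by rewrite !big_ord0; apply: tr_one.
rewrite !big_ord_recl; apply: congX_trans (tr_mul _ _) _.
by apply: congXM congX_refl _; exact: (IH (fun j => F j.+1)).
Qed.

(* The recursion defining [Defs.finv] never revises a coefficient once computed. *)
Lemma finv_upto_stable f m k : (k <= m)%N -> finv_upto f m k = Defs.finv f k.
Proof.
elim: m => [|m IH] Hk; first by move: Hk; rewrite leqn0 => /eqP ->.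
rewrite /=; case: eqP => [->|/eqP Hne]; first by rewrite /Defs.finv /= eqxx.
by apply: IH; rewrite -ltnS ltn_neqAle Hne.
Qed.

Lemma finvS f m :
  Defs.finv f m.+1 = - (f 0%N)^-1 * \sum_(i < m.+1) f i.+1 * Defs.finv f (m - i)%N.
Proof.
rewrite /Defs.finv /= eqxx; congr (_ * _); apply: eq_bigr => i _.
by rewrite finv_upto_stable // leq_subr.
Qed.

Lemma finv_conv f : f 0%N != 0 -> forall k,
  \sum_(i < k.+1) f i * Defs.finv f (k - i)%N = fone k.
Proof.
move=> f0 [|m]; first by rewrite big_ord1 subnn mulfV.
rewrite big_ord_recl subn0 finvS /= /bump.
by rewrite mulrA mulrN mulfV // mulN1r addNr.
Qed.

Definition iv K (p : {poly rat}) : {poly rat} := tr K (Defs.finv (fps_of_poly p)).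

Lemma iv_inverse K (p : {poly rat}) : p`_0 != 0 -> congX K (p * iv K p) 1.
Proof.
move=> p0 i Hi; rewrite coefM coef1.
have -> : (i == 0%N)%:R = fone i :> rat by rewrite /fone; case: (i == 0%N).
rewrite -(finv_conv p0); apply: eq_bigr => j _.
by rewrite coef_tr // (leq_ltn_trans (leq_subr _ _) Hi).
Qed.

Lemma iv_unique K (p u : {poly rat}) :
  p`_0 != 0 -> congX K (p * u) 1 -> congX K (iv K p) u.
Proof.
move=> p0 Hpu.
have Hu : congX K u (u * (p * iv K p)).
  rewrite -{1}[u]mulr1; apply: congXM congX_refl _.
  exact/congX_sym/iv_inverse.
apply/congX_sym/(congX_trans Hu); rewrite mulrA [u * p]mulrC.
by rewrite -[X in congX _ _ X]mul1r; apply: congXM Hpu congX_refl.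
Qed.

Definition pochA (m : nat) : {poly rat} := qpoch (- 'X^3) ('X^4) m.
Definition pochB (m : nat) : {poly rat} := qpoch ('X^2) ('X^2) m.

Lemma pochA_prod m : pochA m = \prod_(j < m) (1 + 'X^(4 * j + 3)).
Proof.
apply: eq_bigr => j _.
by rewrite mulNr opprK -exprM -exprD addnC mulnC.
Qed.

Lemma pochB_prod m : pochB m = \prod_(j < m) (1 - 'X^(2 * j + 2)).
Proof. by apply: eq_bigr => j _; rewrite -exprM -exprD addnC mulnC. Qed.

Lemma pochAS m : pochA m.+1 = pochA m * (1 + 'X^(4 * m + 3)).
Proof. by rewrite !pochA_prod big_ord_recr. Qed.

Lemma pochBS m : pochB m.+1 = pochB m * (1 - 'X^(2 * m + 2)).
Proof. by rewrite !pochB_prod big_ord_recr. Qed.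

Lemma pochB_unit m : (pochB m)`_0 != 0.
Proof.
rewrite pochB_prod coef0_prod big1 ?oner_neq0 // => j _.
by rewrite coef0_1mX ?addn2.
Qed.

Definition excluded (n : nat) : bool :=
  (n == 0%N) || ((n %% 8)%N \in [:: 1%N; 5%N; 6%N]).

Definition rfac (n : nat) : {poly rat} := if excluded n then 1 else 1 - 'X^n.

(* The factors of (q^2;q^2)_{4(J+1)} / (q^2;q^2)_{4J} other than 1 - q^(8J+6). *)
Definition blockB (i : nat) : {poly rat} :=
  (1 - 'X^(8 * i + 2)) * (1 - 'X^(8 * i + 4)) * (1 - 'X^(8 * i + 8)).

Definition factor6 (i : nat) : {poly rat} := 1 - 'X^(8 * i + 6).

Lemma rfac_period J : \prod_(i < 8) rfac (8 * J + i.+1) =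
  (1 - 'X^(8 * J + 2)) * (1 - 'X^(8 * J + 3)) * (1 - 'X^(8 * J + 4))
  * (1 - 'X^(8 * J + 7)) * (1 - 'X^(8 * J + 8)).
Proof.
have res k : ((8 * J + k) %% 8 = k %% 8)%N by rewrite mulnC modnMDl.
rewrite !big_ord_recr big_ord0 /= /rfac /excluded !addn_eq0 !res /= !andbF /=.
by ring.
Qed.

(* Finite form of the product identity: the factors 1 + q^(8i+3), 1 + q^(8i+7)
   turn the denominators 1 - q^(8i+3), 1 - q^(8i+7) into 1 - q^(16i+6) and
   1 - q^(16i+14), i.e. into the factors 1 - q^(8i+6), i < 2J. *)
Lemma pochA_rfac_closed J :
  pochA (2 * J) * \prod_(n < (8 * J).+1) rfac n =
  (\prod_(i < J) blockB i) * \prod_(i < 2 * J) factor6 i.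
Proof.
elim: J => [|J IH]; first by rewrite !big_ord0 big_ord1 /rfac /pochA /qpoch big_ord0.
rewrite (_ : (2 * J.+1 = (2 * J).+2)%N); last by lia.
rewrite (_ : ((8 * J.+1).+1 = (8 * J).+1 + 8)%N); last by lia.
rewrite !pochAS big_split_ord /=.
under [\big[_/_]_(i < 8) _]eq_bigr => i _ do rewrite addSnnS.
rewrite -[pochA _ * _ * _]mulrA mulrACA IH rfac_period !big_ord_recr /= /blockB /factor6.
rewrite (_ : (4 * (2 * J) + 3 = 8 * J + 3)%N); last by lia.
rewrite (_ : (4 * (2 * J).+1 + 3 = 8 * J + 7)%N); last by lia.
rewrite (_ : (8 * (2 * J) + 6 = (8 * J + 3) + (8 * J + 3))%N); last by lia.
rewrite (_ : (8 * (2 * J).+1 + 6 = (8 * J + 7) + (8 * J + 7))%N); last by lia.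
by rewrite !exprD; ring.
Qed.

Lemma pochB_closed J :
  pochB (4 * J) = (\prod_(i < J) blockB i) * \prod_(i < J) factor6 i.
Proof.
elim: J => [|J IH]; first by rewrite !big_ord0 /pochB /qpoch big_ord0 mulr1.
rewrite (_ : (4 * J.+1 = (4 * J).+4)%N); last by lia.
rewrite !pochBS IH !big_ord_recr /= /blockB /factor6.
rewrite (_ : (2 * (4 * J) + 2 = 8 * J + 2)%N); last by lia.
rewrite (_ : (2 * (4 * J).+1 + 2 = 8 * J + 4)%N); last by lia.
rewrite (_ : (2 * (4 * J).+2 + 2 = 8 * J + 6)%N); last by lia.
rewrite (_ : (2 * (4 * J).+3 + 2 = 8 * J + 8)%N); last by lia.
by ring.
Qed.

Lemma pochA_stable K m m' : (K <= m)%N -> (K <= m')%N ->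
  congX K (pochA m) (pochA m').
Proof.
move=> Hm Hm'; rewrite !pochA_prod.
apply: (congX_prod_stable (F := fun j => 1 + 'X^(4 * j + 3))) => // j Hj.
by apply: congX_1pX; lia.
Qed.

Lemma pochB_stable K m m' : (K <= m)%N -> (K <= m')%N ->
  congX K (pochB m) (pochB m').
Proof.
move=> Hm Hm'; rewrite !pochB_prod.
apply: (congX_prod_stable (F := fun j => 1 - 'X^(2 * j + 2))) => // j Hj.
by apply: congX_1mX; lia.
Qed.

Lemma rfac_stable K L L' : (K <= L)%N -> (K <= L')%N ->
  congX K (\prod_(n < L) rfac n) (\prod_(n < L') rfac n).
Proof.
move=> HL HL'; apply: (congX_prod_stable (F := rfac)) => // n Hn; rewrite /rfac.
by case: ifP => _; [exact: congX_refl | exact: congX_1mX].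
Qed.

Lemma factor6_stable K L L' : (K <= L)%N -> (K <= L')%N ->
  congX K (\prod_(i < L) factor6 i) (\prod_(i < L') factor6 i).
Proof.
move=> HL HL'; apply: (congX_prod_stable (F := factor6)) => // i Hi.
by apply: congX_1mX; lia.
Qed.

Lemma product_identity K m : (K <= m)%N ->
  congX K (pochA m * \prod_(n < K) rfac n) (pochB m).
Proof.
move=> Hm.
have HA : congX K (pochA m) (pochA (2 * K)) by apply: pochA_stable; lia.
have HD : congX K (\prod_(n < K) rfac n) (\prod_(n < (8 * K).+1) rfac n).
  by apply: rfac_stable; lia.
have H6 : congX K (\prod_(i < 2 * K) factor6 i) (\prod_(i < K) factor6 i).
  by apply: factor6_stable; lia.
have HB : congX K (pochB (4 * K)) (pochB m) by apply: pochB_stable; lia.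
apply: congX_trans (congXM HA HD) _; rewrite pochA_rfac_closed.
by apply: congX_trans HB; rewrite pochB_closed; apply: congXM congX_refl H6.
Qed.

Lemma tr_quotient K p r :
  congX K (tr K (fmul (fps_of_poly p) (Defs.finv (fps_of_poly r)))) (p * iv K r).
Proof. exact: congX_trans (tr_mul _ _) (congXM (tr_poly _) congX_refl). Qed.

(* The (m+1)-st term of the left-hand side is
   (-q^3;q^4)_m q^(2m+2) (1 + q^(2m+1)) / (q^2;q^2)_(m+1), including m = 0. *)
Lemma tr_lhs_term K m : congX K (tr K (lhs_term m.+1))
  (pochA m * 'X^(2 * m.+1) * (1 + 'X^((2 * m.+1).-1)) * iv K (pochB m.+1)).
Proof.
case: m => [|m]; last exact: tr_quotient.
have -> : pochA 0 * 'X^(2 * 1) * (1 + 'X^((2 * 1).-1)) = 'X^2 + 'X^3.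
  by rewrite /pochA /qpoch big_ord0 (exprS _ 2); ring.
by rewrite pochBS /pochB /qpoch big_ord0 mul1r; apply: tr_quotient.
Qed.

(* The partial sums telescope: the first m+1 terms add up to
   (-q^3;q^4)_m / (q^2;q^2)_m. *)
Lemma lhs_partial_sum K m :
  congX K (\sum_(n < m.+1) tr K (lhs_term n)) (pochA m * iv K (pochB m)).
Proof.
elim: m => [|m IH].
  rewrite big_ord1 /pochA /pochB /qpoch !big_ord0 mul1r /=.
  apply: congX_trans (@tr_one K) (congX_sym _).
  by apply: iv_unique; rewrite ?coef1 ?oner_neq0 ?mulr1.
have Hinv : congX K (iv K (pochB m)) ((1 - 'X^(2 * m + 2)) * iv K (pochB m.+1)).
  apply: iv_unique; first exact: pochB_unit.
  by rewrite mulrA -pochBS; apply/iv_inverse/pochB_unit.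
rewrite big_ord_recr /=.
apply: congX_trans (congXD IH (tr_lhs_term m)) _.
apply: congX_trans (congXD (congXM congX_refl Hinv) congX_refl) _.
rewrite pochAS (_ : (2 * m.+1 = 2 * m + 2)%N); last by lia.
rewrite (_ : ((2 * m + 2).-1 = 2 * m + 1)%N); last by lia.
rewrite (_ : (4 * m + 3 = (2 * m + 2) + (2 * m + 1))%N); last by lia.
rewrite (exprD _ (2 * m + 2)).
have -> : forall a b c e : {poly rat},
    a * ((1 - b) * e) + a * b * (1 + c) * e = a * (1 + b * c) * e.
  by move=> a b c e; ring.
exact: congX_refl.
Qed.

Definition rinv K (n : nat) : {poly rat} :=
  if excluded n then 1 else iv K (1 - 'X^n).

Lemma rfac_rinv K n : congX K (rfac n * rinv K n) 1.
Proof.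
rewrite /rfac /rinv; case: ifP => [_|Hn]; first by rewrite mulr1.
apply: iv_inverse; rewrite coef0_1mX ?oner_neq0 //.
by move: Hn; case: n.
Qed.

Lemma rinv_stable K n : (K <= n)%N -> congX K (rinv K n) 1.
Proof.
move=> Hn; rewrite /rinv; case: ifP => [_|Hexc]; first exact: congX_refl.
apply: iv_unique; last by rewrite mulr1; apply: congX_1mX.
by rewrite coef0_1mX ?oner_neq0 //; move: Hexc; case: n {Hn}.
Qed.

Lemma lhs_truncation K m : (K <= m)%N ->
  congX K (pochA m * iv K (pochB m)) (\prod_(n < K) rinv K n).
Proof.
move=> Hm.
have HDC : congX K (\prod_(n < K) rfac n * \prod_(n < K) rinv K n) 1.
  rewrite -big_split /=.
  apply: congX_trans (congX_prod (G := fun=> 1) (fun n _ => @rfac_rinv K n)) _.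
  by rewrite big1.
have HBB : congX K (pochB m * iv K (pochB m)) 1.
  exact/iv_inverse/pochB_unit.
rewrite -[X in congX _ X _]mulr1.
apply: congX_trans (congXM congX_refl (congX_sym HDC)) _.
rewrite mulrACA mulrA.
apply: congX_trans (congXM (congXM (product_identity Hm) congX_refl) congX_refl) _.
by rewrite -[X in congX _ _ X]mul1r; apply: congXM HBB congX_refl.
Qed.

Lemma rhs_truncation K M : (K <= M)%N ->
  congX K (tr K (\big[fmul/fone]_(n < M) rhs_factor n)) (\prod_(n < K) rinv K n).
Proof.
move=> HM.
have Hfactor n : congX K (tr K (rhs_factor n)) (rinv K n).
  rewrite /rhs_factor /rinv -/(excluded n).
  by case: ifP => _; [exact: tr_one | exact: congX_refl].
apply: congX_trans (tr_bigmul M rhs_factor) _.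
apply: congX_trans (congX_prod (fun n _ => Hfactor n)) _.
apply: (congX_prod_stable (F := rinv K)) => // n Hn.
exact: rinv_stable.
Qed.

Lemma common_limit (s t : nat -> fps) (c : nat -> {poly rat}) :
  (forall K M, (K < M)%N -> congX K (tr K (s M)) (c K)) ->
  (forall K M, (K < M)%N -> congX K (tr K (t M)) (c K)) ->
  exists P : fps, fps_lim s P /\ fps_lim t P.
Proof.
move=> Hs Ht; exists (fun k => (c k.+1)`_k).
have lim u : (forall K M, (K < M)%N -> congX K (tr K (u M)) (c K)) ->
    fps_lim u (fun k => (c k.+1)`_k).
  by move=> Hu k; exists k.+2 => M HM; rewrite -(coef_tr (K := k.+1)) // Hu.
by split; [exact: lim Hs | exact: lim Ht].
Qed.

(* Beyond index K, both sides are congruent modulo X^K to prod_{n<K} rinv K n. *)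
Theorem theorem12 :
  exists P : fps,
    fps_lim (fun M => \big[fadd/fzero]_(n < M) lhs_term n) P /\
    fps_lim (fun M => \big[fmul/fone]_(n < M) rhs_factor n) P.
Proof.
apply: (common_limit (c := fun K => \prod_(n < K) rinv K n)) => K M HKM.
  case: M HKM => // m HKm; rewrite tr_bigadd.
  exact: congX_trans (lhs_partial_sum m) (lhs_truncation (m := m) HKm).
exact/rhs_truncation/ltnW.
Qed.
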